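(* In the setting below, suppose that either (1) $\mathbb{P}(X=x)>0$, or (2) there exists $r>0$ such that $\mathbb{E}[\mathbb{I}_{\bar B_r}(X)\,|\eta(X)-\eta(x)|]=0$. Then $\mathbb{E}\big[|\eta(X^x_m)-\eta(x)|\big]\to 0$ as $m\to\infty$.
   Context: Let $(\mathcal{X},d)$ be a metric space with its Borel $\sigma$-algebra, let $(\Omega,\mathcal{F},\mathbb{P})$ be a probability space, and let $X,X_1,X_2,\dots$ be i.i.d. $\mathcal{X}$-valued random variables with common law $\mathbb{P}_X$. For $x\in\mathcal{X}$ and $r>0$ write $B_r=\{x':d(x,x')<r\}$, $\bar B_r=\{x':d(x,x')\le r\}$ and $S_r=\{x':d(x,x')=r\}$. The support of $\mathbb{P}_X$ is the set of $x$ such that $\mathbb{P}_X(\bar B_r(x))>0$ for all $r>0$. Fix $x$ in the support of $\mathbb{P}_X$ and a bounded measurable $\eta:\mathcal{X}\to\mathbb{R}$. For each $m\in\mathbb{N}$, a nearest neighbor of $x$ among $X_1,\dots,X_m$ is a measurable $X^x_m:\Omega\to\mathcal{X}$ with $X^x_m(\omega)\in\arg\min_{x'\in\{X_1(\omega),\dots,X_m(\omega)\}}d(x,x')$ for every $\omega\in\Omega$; fix such a sequence $(X^x_m)_{m\in\mathbb{N}}$. *)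

From HB Require Import structures.
From mathcomp Require Import all_boot all_order all_algebra.
From mathcomp Require Import all_classical all_reals all_analysis.
Set Implicit Arguments. Unset Strict Implicit. Unset Printing Implicit Defensive.
Import Order.TTheory GRing.Theory Num.Theory.
Local Open Scope classical_set_scope.
Local Open Scope ring_scope.

Definition is_metric {R : realType} {T : Type} (dist : T -> T -> R) : Prop :=
  (forall x y, 0 <= dist x y) /\
  (forall x y, dist x y = 0 <-> x = y) /\
  (forall x y, dist x y = dist y x) /\
  (forall x y z, dist x z <= dist x y + dist y z).

Definition oball {R : realType} {T : Type} (dist : T -> T -> R) (x : T) (r : R)
  : set T := [set y | dist x y < r].
Definition cball {R : realType} {T : Type} (dist : T -> T -> R) (x : T) (r : R)
  : set T := [set y | dist x y <= r].

Definition metric_open {R : realType} {T : Type} (dist : T -> T -> R) : set (set T) :=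
  [set A | forall x, A x -> exists2 r : R, 0 < r & oball dist x r `<=` A].

Definition is_borel_of {R : realType} {d : measure_display} {T : measurableType d}
  (dist : T -> T -> R) : Prop :=
  @measurable d T = <<s metric_open dist >>.

Definition mutually_independent {R : realType} {dO : measure_display}
  {Omega : measurableType dO} (P : probability Omega R)
  {d : measure_display} {T : measurableType d} {I : eqType} (Y : I -> Omega -> T)
  : Prop :=
  forall (J : seq I), uniq J ->
  forall (A : I -> set T), (forall i, measurable (A i)) ->
    P (\bigcap_(i in [set` J]) (Y i @^-1` A i)) = (\prod_(i <- J) P (Y i @^-1` A i))%E.

Definition in_support {R : realType} {dO : measure_display}
  {Omega : measurableType dO} (P : probability Omega R)
  {d : measure_display} {T : measurableType d} (dist : T -> T -> R)
  (Y : Omega -> T) (x : T) : Prop :=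
  forall r : R, 0 < r -> (0 < P (Y @^-1` cball dist x r))%E.

Definition is_nearest_neighbor {R : realType} {Omega T : Type}
  (dist : T -> T -> R) (x : T) (Y : nat -> Omega -> T) (m : nat) (Z : Omega -> T)
  : Prop :=
  forall w, (exists2 i, (i < m)%N & Z w = Y i w) /\
            (forall i, (i < m)%N -> dist x (Z w) <= dist x (Y i w)).

From HB Require Import structures.
From mathcomp Require Import all_boot all_order all_algebra.
From mathcomp Require Import all_classical all_reals all_analysis.
From mathcomp Require Import lra measurable_realfun.
Set Implicit Arguments. Unset Strict Implicit. Unset Printing Implicit Defensive.
Import Order.TTheory GRing.Theory Num.Theory.
Local Open Scope classical_set_scope.
Local Open Scope ring_scope.

(* Both hypotheses of the theorem yield a radius r >= 0 such that the closed
   ball C = cball x r has positive mass q = P(X \in C) and eta = eta x almost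
   surely on C: for (1) take r = 0, so C = {x}; for (2) C has positive mass
   because x lies in the support, and the vanishing integral forces
   eta(X) = eta x almost surely on the event X \in C.
   Under these two facts the error |eta(NN_m) - eta x| is bounded by
   2M * 1_{D_m \cup U}, where
   - D_m is the event that none of X_0, ..., X_{m-1} falls into C; by
     independence and identical distribution P(D_m) = (1 - q)^m;
   - U is the null event that some X_i falls into C with eta(X_i) <> eta x.
   Indeed off D_m \cup U some sample lies in C, hence so does the nearest
   neighbour, which is then a sample in C where eta agrees with eta x.
   Hence the risk is squeezed between 0 and 2M (1 - q)^m, which tends to 0. *)

Lemma preimage_measurable (d d' : measure_display) (T : measurableType d)
    (U : measurableType d') (f : T -> U) (A : set U) :
  measurable_fun setT f -> measurable A -> measurable (f @^-1` A).
Proof. by move=> mf mA; rewrite -[f @^-1` A]setTI; exact: mf. Qed.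

Section MetricBalls.
Variables (R : realType) (d : measure_display) (T : measurableType d).
Variable (dist : T -> T -> R).
Hypothesis dist_metric : is_metric dist.

(* Closed balls are Borel: their complements are open. *)
Lemma cball_measurable (T_borel : is_borel_of dist) x r :
  measurable (cball dist x r).
Proof.
case: dist_metric => _ [_ [dsym dtri]].
rewrite -(setCK (cball dist x r)); apply: measurableC.
rewrite T_borel; apply: sub_sigma_algebra => y /= ny.
exists (dist x y - r); first by rewrite subr_gt0 ltNge; apply/negP.
move=> z; rewrite /oball /cball /= => hz hxz.
by have := dtri x z y; rewrite (dsym z y); lra.
Qed.

Lemma cball0 x : cball dist x 0 = [set x].
Proof.
case: dist_metric => d0 [deq _].
apply/seteqP; split => y /=; last by move=> ->; rewrite /cball /= (deq x x).2.
by rewrite /cball /= => hxy; apply/esym/deq/le_anti; rewrite hxy d0.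
Qed.

End MetricBalls.

Section NearestNeighborRisk.
Variables (R : realType) (d : measure_display) (T : measurableType d).
Variables (dist : T -> T -> R) (x : T) (r : R).
Variables (dO : measure_display) (Omega : measurableType dO).
Variables (P : probability Omega R) (X : Omega -> T) (Xs : nat -> Omega -> T).
Hypotheses (mX : measurable_fun setT X) (mXs : forall i, measurable_fun setT (Xs i)).
Hypothesis indep : mutually_independent P
  (fun o : option nat => match o with None => X | Some i => Xs i end).
Hypothesis ident : forall i (A : set T), measurable A ->
  P (Xs i @^-1` A) = P (X @^-1` A).
Variables (eta : T -> R) (M : R).
Hypotheses (meta : measurable_fun setT eta) (eta_bdd : forall y, `|eta y| <= M).
Variable (NN : nat -> Omega -> T).
Hypothesis mNN : forall m, (0 < m)%N -> measurable_fun setT (NN m).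
Hypothesis NN_nn : forall m, (0 < m)%N -> is_nearest_neighbor dist x Xs m (NN m).

Let C := cball dist x r.
Definition eta_differs : set T := C `&` eta @^-1` (~` [set eta x]).
Hypothesis mC : measurable C.
Hypothesis C_mass : (0 < P (X @^-1` C))%E.
Hypothesis differs_null : P (X @^-1` eta_differs) = 0%E.

Definition misses_ball m : set Omega :=
  \bigcap_(i in [set k | (k < m)%N]) (Xs i @^-1` ~` C).
Definition bad_sample : set Omega := \bigcup_i (Xs i @^-1` eta_differs).

Let q := fine (P (X @^-1` C)).

Lemma ball_massE : P (X @^-1` C) = q%:E.
Proof. by rewrite fineK // fin_num_measure //; exact: preimage_measurable. Qed.

Lemma ball_mass_gt0 : 0 < q.
Proof. by have := C_mass; rewrite ball_massE lte_fin. Qed.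

Lemma ball_mass_le1 : q <= 1.
Proof.
by rewrite -lee_fin -ball_massE probability_le1 //; exact: preimage_measurable.
Qed.

Lemma eta_differs_measurable : measurable eta_differs.
Proof.
apply: measurableI => //; apply: preimage_measurable => //.
exact: measurableC (measurable_set1 _).
Qed.

Lemma misses_ball_measurable m : measurable (misses_ball m).
Proof.
by apply: bigcap_measurableType => i _; apply: preimage_measurable => //;
  exact: measurableC.
Qed.

Lemma bad_sample_measurable : measurable bad_sample.
Proof.
apply: bigcupT_measurable => i; apply: preimage_measurable => //.
exact: eta_differs_measurable.
Qed.

(* Independence and identical distribution: P(D m) = (1 - q)^m. *)
Lemma misses_ball_prob m : P (misses_ball m) = ((1 - q) ^+ m)%:E.
Proof.
have -> : misses_ball m = \bigcap_(o in [set` map Some (iota 0 m)])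
    ((fun o : option nat => match o with None => X | Some i => Xs i end) o
      @^-1` ~` C).
  apply/seteqP; split => w /= Dw.
    by move=> o /mapP[j]; rewrite mem_iota add0n => /andP[_ jm] ->; exact: Dw.
  by move=> i im; apply: (Dw (Some i)); apply: map_f; rewrite mem_iota add0n.
rewrite indep; first last.
- by move=> o; exact: measurableC.
- by rewrite map_inj_uniq ?iota_uniq // => a b [].
rewrite big_map (eq_bigr (fun _ => (1 - q)%:E)).
  have -> : iota 0 m = index_iota 0 m by rewrite /index_iota subn0.
  by rewrite prodEFin big_mkord prodr_const card_ord.
move=> i _; rewrite ident; last exact: measurableC.
rewrite preimage_setC probability_setC; last exact: (preimage_measurable mX mC).
by rewrite (_ : P _ = q%:E) //; exact: ball_massE.
Qed.

Lemma bad_sample_null : P bad_sample = 0%E.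
Proof.
apply/(negligibleP _ bad_sample_measurable); apply: negligible_bigcup => i.
have mi := preimage_measurable (mXs i) eta_differs_measurable.
apply/(negligibleP _ mi).
exact: etrans (ident i eta_differs_measurable) differs_null.
Qed.

(* Off D m \cup U the nearest neighbour lies in C where eta equals eta x,
   so the error vanishes; elsewhere it is at most 2M. *)
Lemma nn_error_le m w : (0 < m)%N ->
  `|eta (NN m w) - eta x| <= (2 * M) * \1_(misses_ball m `|` bad_sample) w.
Proof.
move=> m0; case: (NN_nn m0 w) => -[j jm NNj] NN_min.
have [DUw|nDUw] := pselect ((misses_ball m `|` bad_sample) w).
  rewrite indicE mem_set // mulr1.
  have := eta_bdd (NN m w); have := eta_bdd x.
  by have := ler_normB (eta (NN m w)) (eta x); lra.
rewrite indicE memNset // mulr0.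
have [i im Ci] : exists2 i, (i < m)%N & C (Xs i w).
  by apply: contra_notP nDUw => noC; left => i im Ci; apply: noC; exists i.
have C_NN : C (NN m w) by apply: le_trans (NN_min i im) Ci.
have [->|ne] := eqVneq (eta (NN m w)) (eta x); first by rewrite subrr normr0.
exfalso; apply: nDUw; right; exists j => //=; rewrite -NNj; split => //= eq_eta.
by rewrite eq_eta eqxx in ne.
Qed.

(* Integrating the pointwise bound: 0 <= risk <= 2M (1 - q)^m. *)
Lemma nn_risk_le m : (0 < m)%N ->
  (0 <= \int[P]_w (`|eta (NN m w) - eta x|)%:E <= (2 * M * (1 - q) ^+ m)%:E)%E.
Proof.
move=> m0; have M0 : 0 <= M by apply: le_trans (eta_bdd x).
have mDU : measurable (misses_ball m `|` bad_sample).
  exact: measurableU (misses_ball_measurable m) bad_sample_measurable.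
apply/andP; split; first by apply: integral_ge0 => w _; rewrite lee_fin.
apply: (@le_trans _ _ (\int[P]_w (2 * M * \1_(misses_ball m `|` bad_sample) w)%:E)%E).
  apply: ge0_le_integral => //.
  - apply/measurable_EFinP; apply: measurableT_comp => //.
    by apply: measurable_funB => //; apply: measurableT_comp => //; exact: mNN.
  - by apply/measurable_EFinP; apply: measurable_funM => //; exact: measurable_indic.
  - by move=> w _; rewrite lee_fin nn_error_le.
rewrite (@integralZl_indic _ _ _ P setT measurableT
  (fun=> misses_ball m `|` bad_sample)) //; last first.
  by rewrite ltNge mulr_ge0.
rewrite integral_indic // setIT (EFinM (2 * M)).
apply: lee_wpmul2l; first by rewrite lee_fin mulr_ge0.
have PDU : (P (misses_ball m) + P bad_sample = ((1 - q) ^+ m)%:E)%E.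
  by rewrite misses_ball_prob bad_sample_null adde0.
rewrite -PDU; apply: measureU2;
  [exact: misses_ball_measurable | exact: bad_sample_measurable].
Qed.

Lemma nn_risk_cvg0 :
  (fun m => \int[P]_w (`|eta (NN m w) - eta x|)%:E)%E @ \oo --> 0%E.
Proof.
set risk := (fun m => _).
have risk_bounds : \forall m \near \oo,
    (0 <= risk m <= (2 * M * (1 - q) ^+ m)%:E)%E.
  by near=> m; apply: nn_risk_le; near: m; exists 1%N.
have risk_fin : \forall m \near \oo, risk m \is a fin_num.
  near=> m; have /andP[risk_ge0 risk_le] : (0 <= risk m <= (2 * M * (1 - q) ^+ m)%:E)%E.
    by near: m.
  by rewrite ge0_fin_numE // (le_lt_trans risk_le) ?ltey.
apply/fine_cvgP; split => //.
have geom_cvg : geometric (2 * M) (1 - q) @ \oo --> 0.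
  apply: cvg_geometric.
  by rewrite ger0_norm ?subr_ge0 ?ball_mass_le1 // gtrBl ball_mass_gt0.
have zero_cvg : (@cst nat R 0) @ \oo --> 0 by exact: (cvg_cst (0 : R^o)).
apply: (squeeze_cvgr _ zero_cvg geom_cvg); near=> m.
have /andP[risk_ge0 risk_le] : (0 <= risk m <= (2 * M * (1 - q) ^+ m)%:E)%E.
  by near: m.
have /fineK risk_fine : risk m \is a fin_num by near: m.
by rewrite /= -!lee_fin risk_fine risk_ge0 risk_le.
Unshelve. all: by end_near.
Qed.

End NearestNeighborRisk.

Lemma eta_differs_cball0 (R : realType) (d : measure_display) (T : measurableType d)
    (dist : T -> T -> R) (x : T) (eta : T -> R) :
  is_metric dist -> eta_differs dist x 0 eta = set0.
Proof.
move=> dist_metric; rewrite /eta_differs cball0 //.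
by apply/seteqP; split => // y /= [-> /(_ erefl)].
Qed.

(* Hypothesis (2): a nonnegative function with null integral vanishes almost
   surely, so eta(X) = eta x almost surely on the event X \in cball x r. *)
Lemma eta_differs_null_of_integral (R : realType) (d : measure_display)
    (T : measurableType d) (dist : T -> T -> R) (x : T) (r : R)
    (dO : measure_display) (Omega : measurableType dO)
    (P : probability Omega R) (X : Omega -> T) (eta : T -> R) :
  measurable_fun setT X -> measurable_fun setT eta ->
  measurable (cball dist x r) ->
  (\int[P]_w ((\1_(cball dist x r) (X w) : R) * `|eta (X w) - eta x|)%:E
     = 0)%E ->
  P (X @^-1` eta_differs dist x r eta) = 0%E.
Proof.
move=> mX meta mC null_integral.
pose g w := (\1_(cball dist x r) (X w) : R) * `|eta (X w) - eta x|.
have mg : measurable_fun setT (fun w => (g w)%:E).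
  apply/measurable_EFinP; apply: measurable_funM.
    by apply: measurableT_comp => //; exact: measurable_indic.
  apply: measurableT_comp => //; apply: measurable_funB => //.
  exact: measurableT_comp.
have : ae_eq P setT (fun w => (g w)%:E) (cst 0%E).
  apply/(ae_eq_integral_abs P measurableT mg).
  rewrite -null_integral; apply: eq_integral => w _.
  by rewrite gee0_abs // lee_fin /g mulr_ge0.
move=> [N [mN PN g_zero_off_N]].
apply: (subset_measure0 _ mN) => //.
  apply: preimage_measurable => //; exact: eta_differs_measurable.
move=> w /= [Cw eta_ne]; apply: g_zero_off_N => /= /(_ I).
rewrite /g indicE mem_set // mul1r => /eqP.
by rewrite eqe normr_eq0 subr_eq0 => /eqP.
Qed.

Theorem mainTheorem2 (R : realType)
  (d : measure_display) (T : measurableType d) (dist : T -> T -> R)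
  (dist_metric : is_metric dist) (T_borel : is_borel_of dist)
  (dO : measure_display) (Omega : measurableType dO) (P : probability Omega R)
  (X : Omega -> T) (Xs : nat -> Omega -> T)
  (mX : measurable_fun setT X) (mXs : forall i, measurable_fun setT (Xs i))
  (indep : mutually_independent P
     (fun o : option nat => match o with None => X | Some i => Xs i end))
  (ident : forall i (A : set T), measurable A ->
     P (Xs i @^-1` A) = P (X @^-1` A))
  (x : T) (x_supp : in_support P dist X x)
  (eta : T -> R) (meta : measurable_fun setT eta)
  (eta_bdd : exists M : R, forall y, `|eta y| <= M)
  (NN : nat -> Omega -> T)
  (mNN : forall m, (0 < m)%N -> measurable_fun setT (NN m))
  (NN_nn : forall m, (0 < m)%N -> is_nearest_neighbor dist x Xs m (NN m))
  (hyp : (0 < P (X @^-1` [set x]))%E \/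
         exists2 r : R, 0 < r &
           (\int[P]_w ((\1_(cball dist x r) (X w) : R) * `|eta (X w) - eta x|)%:E
              = 0)%E) :
  (fun m => \int[P]_w (`|eta (NN m w) - eta x|)%:E)%E @ \oo --> 0%E.
Proof.
have mC := cball_measurable dist_metric T_borel x.
have [r C_mass differs_null] : exists2 r : R,
    (0 < P (X @^-1` cball dist x r))%E &
    P (X @^-1` eta_differs dist x r eta) = 0%E.
  case: hyp => [atom | [r r_gt0 null_integral]].
  - exists 0; first by rewrite cball0.
    by rewrite eta_differs_cball0 // preimage_set0 measure0.
  - exists r; first exact: x_supp r_gt0.
    exact: eta_differs_null_of_integral.
case: eta_bdd => M eta_bdd.
have risk_cvg := nn_risk_cvg0 mX mXs indep ident meta eta_bdd mNN NN_nn (mC r)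
  C_mass differs_null.
exact risk_cvg.
Qed.
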